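(* Let $p$ be a directed lattice path on the square grid with at least one step, with first step $\mathbf a$ and last step $\mathbf b$, and set $x^{\circlearrowright}(p)=(x_{ur},x_{rd},x_{dl},x_{lu})$ and $x^{\circlearrowleft}(p)=(x_{ru},x_{dr},x_{ld},x_{ul})$, where $x_{st}$ is the number of turns of type $st$ in $p$. (1) There is an integer $k$ such that $v(p):=x^{\circlearrowright}(p)-x^{\circlearrowleft}(p)-k(1,1,1,1)\in\{0,1\}^4$. (2) Writing $v(p)=(v_{ur},v_{rd},v_{dl},v_{lu})$, let $\mathbf a=s_0,s_1,\dots,s_m=\mathbf b$ be the shortest sequence ($0\le m\le 3$) in which each $s_{j+1}$ is the clockwise successor of $s_j$ in the cyclic order $u\to r\to d\to l\to u$. Then $v_t=1$ if and only if $t=s_js_{j+1}$ for some $0\le j<m$. (3) If $p$ is closed and self-avoiding, with turns counted cyclically, then $(x^{\circlearrowright}(p)-x^{\circlearrowleft}(p))\cdot(1,1,1,1)^t$ equals $4$ if $p$ is oriented clockwise and $-4$ if it is oriented counterclockwise.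
   Context: A directed lattice path is a finite sequence of steps, each in $\{u=(0,1),\ r=(1,0),\ d=(0,-1),\ l=(-1,0)\}$, such that no two consecutive steps are opposite. A turn of type $st$ (with $s\ne t$) is an occurrence of a step $s$ immediately followed by a step $t$. A path is closed if it ends at its starting point; for closed paths the last step is considered to be followed by the first step (turns counted cyclically), and it is self-avoiding if it visits no lattice point twice except that start equals end. Its orientation is clockwise or counterclockwise as a simple closed polygon. *)

From HB Require Import structures.
From mathcomp Require Import all_boot all_order all_algebra.
Set Implicit Arguments. Unset Strict Implicit. Unset Printing Implicit Defensive.
Import Order.TTheory GRing.Theory Num.Theory.
Local Open Scope ring_scope.

Inductive step := U | R | D | L.

Definition step_eqb (a b : step) : bool :=
  match a, b with
  | U, U | R, R | D, D | L, L => true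
  | _, _ => false
  end.

Lemma step_eqP : Equality.axiom step_eqb.
Proof. by case; case; constructor. Qed.

HB.instance Definition _ := hasDecEq.Build step step_eqP.

Definition dx (s : step) : int :=
  match s with U => 0 | R => 1 | D => 0 | L => -1 end.
Definition dy (s : step) : int :=
  match s with U => 1 | R => 0 | D => -1 | L => 0 end.

Definition opp (s : step) : step :=
  match s with U => D | R => L | D => U | L => R end.

Definition cw_next (s : step) : step :=
  match s with U => R | R => D | D => L | L => U end.

Definition directed (p : seq step) : bool :=
  all (fun st => st.2 != opp st.1) (zip p (behead p)).

Definition turns (p : seq step) (s t : step) : nat :=
  count (fun st => (st.1 == s) && (st.2 == t)) (zip p (behead p)).

(* number of turns of type st counted cyclically (last step followed by first) *)
Definition cturns (p : seq step) (s t : step) : nat :=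
  count (fun st => (st.1 == s) && (st.2 == t)) (zip p (rot 1 p)).

(* component of x^cw(p) - x^ccw(p) indexed by s, i.e. at the turn type
   s (cw_next s): the components ur,rd,dl,lu of x^cw correspond to
   ru,dr,ld,ul of x^ccw. *)
Definition xdiff (p : seq step) (s : step) : int :=
  (turns p s (cw_next s))%:Z - (turns p (cw_next s) s)%:Z.

Definition cxdiff (p : seq step) (s : step) : int :=
  (cturns p s (cw_next s))%:Z - (cturns p (cw_next s) s)%:Z.

Definition posx (p : seq step) (i : nat) : int := \sum_(s <- take i p) dx s.
Definition posy (p : seq step) (i : nat) : int := \sum_(s <- take i p) dy s.

Definition closed (p : seq step) : bool :=
  (posx p (size p) == 0) && (posy p (size p) == 0).

Definition self_avoiding_closed (p : seq step) : Prop :=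
  closed p /\
  forall i j : nat, (i < j)%N -> (j < size p)%N ->
    (posx p i, posy p i) <> (posx p j, posy p j).

(* twice the signed (shoelace) area of the polygon traced by p *)
Definition area2 (p : seq step) : int :=
  \sum_(i < size p) (posx p i * posy p i.+1 - posx p i.+1 * posy p i).

(* orientation of a simple closed polygon: counterclockwise iff positive
   signed area, clockwise iff negative signed area *)
Definition clockwise (p : seq step) : bool := area2 p < 0.
Definition counterclockwise (p : seq step) : bool := 0 < area2 p.

From Pilot Require Import Defs.
From HB Require Import structures.
From mathcomp Require Import all_boot all_order all_algebra.
From mathcomp Require Import zify ring.
Import Order.TTheory GRing.Theory Num.Theory.
Local Open Scope ring_scope.

(* Parts (1) and (2): along a directed path, [xdiff p s - xdiff p (cw_next s)]
   only depends on the first and the last step, and so does the corresponding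
   difference of the indicator of the clockwise arc from [a] to [b]; hence the
   two differ by a constant.

   Part (3): the four cyclic differences add up to -4 times the rotation number
   of the polygon, its total turning counted as crossings of a fixed direction.
   For a simple polygon a discrete Hopf argument on the secants expresses the
   rotation number, at each vertex, through the winding numbers of the unit
   cells around that vertex. Sweeping the plane from the right, it follows that
   every cell has winding number 0 or equal to the rotation number, which is
   then +-1 and attained next to the lowest leftmost vertex. Since twice the
   signed area is the sum of the winding numbers of all cells, the rotation
   number has the sign of the area. *)

Definition b2z (b : bool) : int := if b then 1 else 0.

Ltac b2z_lia :=
  rewrite /b2z; repeat match goal with
  | |- context [if ?b then _ else _] => let E := fresh in case E: b
  end; lia.

Lemma count_b2z (T : Type) (P : pred T) (z : seq T) :
  (count P z)%:Z = \sum_(x <- z) b2z (P x).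
Proof.
elim: z => [|x z IH]; first by rewrite big_nil.
by rewrite /= big_cons -IH; b2z_lia.
Qed.

Lemma sum_b2z_eq (F : nat -> int) k n : (k < n)%N ->
  \sum_(0 <= i < n) b2z (i == k) * F i = F k.
Proof.
move=> lt_kn; rewrite (eq_bigr (fun i => if i == k then F i else 0)) => [|i _].
  by rewrite -big_mkcond big_nat1_eq /= lt_kn.
by rewrite /b2z; case: (i == k); rewrite ?mul1r ?mul0r.
Qed.

Lemma ler_sum_term (F : nat -> int) k n : (forall i, 0 <= F i) -> (k < n)%N ->
  F k <= \sum_(0 <= i < n) F i.
Proof.
move=> F_ge0 lt_kn; rewrite -(sum_b2z_eq F k n lt_kn); apply: ler_sum => i _.
by rewrite /b2z; case: (i == k); rewrite ?mul1r ?mul0r.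
Qed.

Lemma sum_periodic_shift (f : nat -> int) n k : (forall i, f (i + n)%N = f i) ->
  \sum_(0 <= j < n) f (k + j)%N = \sum_(0 <= j < n) f j.
Proof.
move=> f_per; elim: k => [|k IH]; first by apply: eq_bigr => i _; rewrite add0n.
rewrite -IH; case: n f_per {IH} => [|n] f_per; first by rewrite !big_geq.
rewrite [LHS]big_nat_recr // [RHS]big_nat_recl //.
under eq_bigr do rewrite addSnnS.
by rewrite addn0 addSnnS -(f_per k) addrC.
Qed.

Lemma modnS_if n i : (0 < n)%N ->
  (i.+1 %% n = if ((i %% n).+1 < n)%N then (i %% n).+1 else 0)%N.
Proof.
move=> n_gt0; rewrite -addn1 -modnDml addn1.
case: ifP => lt_in; first by rewrite modn_small.
have -> : ((i %% n).+1 = n)%N by have := ltn_pmod i n_gt0; move/negbT: lt_in; lia.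
by rewrite modnn.
Qed.

Lemma sum_b2z_lt (N : nat) (x0 z : int) : x0 <= z <= x0 + N%:Z ->
  \sum_(0 <= a < N) b2z (x0 + a%:Z < z) = z - x0.
Proof.
elim: N z => [|N IH] z /andP [le_x0z le_z]; first by rewrite big_geq //; lia.
rewrite big_nat_recr //=.
have [le_zN|->] : z <= x0 + N%:Z \/ z = x0 + N.+1%:Z by lia.
  by rewrite IH ?le_zN ?le_x0z //; b2z_lia.
rewrite (@eq_big_nat _ _ _ 0 N _ (fun _ => 1)) => [|a /andP [_ lt_aN]]; last by b2z_lia.
by rewrite sumr_const_nat; b2z_lia.
Qed.

(** * Turn counts along a path *)

Definition turn_diff (s x y : step) : int :=
  b2z ((x == s) && (y == cw_next s)) - b2z ((x == cw_next s) && (y == s)).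

Lemma xdiff_cons2 x y q s : xdiff [:: x, y & q] s = turn_diff s x y + xdiff (y :: q) s.
Proof. by rewrite /xdiff /turns /= /turn_diff; b2z_lia. Qed.

Lemma turn_diff_cw_next s x y : y != Defs.opp x ->
  turn_diff s x y - turn_diff (cw_next s) x y =
  b2z (y == cw_next s) - b2z (x == cw_next s).
Proof. by case: s; case: x; case: y => // _; vm_compute. Qed.

Lemma xdiff_sub_cw_next x q s : directed (x :: q) ->
  xdiff (x :: q) s - xdiff (x :: q) (cw_next s) =
  b2z (last x q == cw_next s) - b2z (x == cw_next s).
Proof.
elim: q x => [|y q IH] x; first by rewrite /xdiff /turns /=; lia.
rewrite /directed /= => /andP [xy_nonopp q_dir].
have := turn_diff_cw_next s _ _ xy_nonopp; have := IH y q_dir.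
by rewrite !xdiff_cons2 /=; lia.
Qed.

Definition cw_dist (a b : step) : nat :=
  if a == b then 0 else if cw_next a == b then 1
  else if cw_next (cw_next a) == b then 2 else 3.

Lemma cw_dist_iter {a b m} : (m <= 3)%N -> iter m cw_next a = b -> cw_dist a b = m.
Proof. by case: m => [|[|[|[|m]]]] // _; case: a; case: b. Qed.

Definition in_cw_arc (a b s : step) : bool :=
  has (fun j => iter j cw_next a == s) (iota 0 (cw_dist a b)).

Lemma in_cw_arcP a b m s : (m <= 3)%N -> iter m cw_next a = b ->
  reflect (exists2 j, (j < m)%N & iter j cw_next a = s) (in_cw_arc a b s).
Proof.
move=> m_le3 ab_m; rewrite /in_cw_arc (cw_dist_iter m_le3 ab_m).
apply: (iffP hasP) => [[j]|[j j_lt /eqP js]]; last by exists j; rewrite ?mem_iota.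
by rewrite mem_iota add0n => /andP [_ j_lt] /eqP js; exists j.
Qed.

Lemma in_cw_arc_sub_cw_next a b s :
  b2z (in_cw_arc a b s) - b2z (in_cw_arc a b (cw_next s)) =
  b2z (b == cw_next s) - b2z (a == cw_next s).
Proof. by case: a; case: b; case: s; vm_compute. Qed.

Lemma xdiff_cw_arc p a b : directed p -> p <> [::] -> head a p = a -> last b p = b ->
  exists k, forall s, xdiff p s - k = b2z (in_cw_arc a b s).
Proof.
case: p => [//|x q] p_dir _ /= x_a last_b; subst x.
pose c s := xdiff (a :: q) s - b2z (in_cw_arc a b s).
have c_cw_next s : c s = c (cw_next s).
  have := xdiff_sub_cw_next _ _ s p_dir; rewrite last_b -in_cw_arc_sub_cw_next /c.
  by lia.
have c_const s : c s = c U.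
  by case: s; rewrite ?(c_cw_next U) ?(c_cw_next R) ?(c_cw_next D).
by exists (c U) => s; rewrite -(c_const s) /c; ring.
Qed.

(** * Ray crossings and a discrete Hopf argument *)

(* For an axis-parallel segment from [a] to [b], the signed number of its
   crossings with the ray {(t, -1/2) | t > 0}. *)
Definition xing (ax ay bx by' : int) : int :=
  b2z (0 < ax) * (b2z (0 <= by') - b2z (0 <= ay)).

Definition unit_vec (vx vy : int) : Prop :=
  (vx = 0 /\ (vy = 1 \/ vy = -1)) \/ (vy = 0 /\ (vx = 1 \/ vx = -1)).

(* The two ways around a unit lattice square cross the ray equally often
   as long as the origin is not a corner: no lattice point is inside. *)
Lemma xing_square (ax ay sx sy tx ty : int) :
  unit_vec sx sy -> unit_vec tx ty ->
  ~ (ax = 0 /\ ay = 0) -> ~ (ax + tx = 0 /\ ay + ty = 0) ->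
  ~ (ax - sx = 0 /\ ay - sy = 0) -> ~ (ax + tx - sx = 0 /\ ay + ty - sy = 0) ->
  xing ax ay (ax + tx) (ay + ty) + xing (ax + tx) (ay + ty) (ax + tx - sx) (ay + ty - sy)
  = xing ax ay (ax - sx) (ay - sy) + xing (ax - sx) (ay - sy) (ax - sx + tx) (ay - sy + ty).
Proof.
move=> [[-> [->|->]]|[-> [->|->]]] [[-> [->|->]]|[-> [->|->]]] *;
  rewrite ?addr0 ?subr0 ?opprK /xing; b2z_lia.
Qed.

Section DiscreteHopf.

Variables (x y : nat -> int) (n : nat).
Hypothesis unit_steps : forall i, unit_vec (x i.+1 - x i) (y i.+1 - y i).
Hypothesis secant_neq0 : forall i j, (i < j)%N -> (j <= n)%N -> ~ (i = 0%N /\ j = n) ->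
  ~ (x j - x i = 0 /\ y j - y i = 0).
Hypothesis n_ge3 : (3 <= n)%N.

(* Crossings of the secant [v_j - v_i] as [j], resp. [i], advances by one. *)
Definition secant_xing_r i j := xing (x j - x i) (y j - y i) (x j.+1 - x i) (y j.+1 - y i).
Definition secant_xing_l i j := xing (x j - x i) (y j - y i) (x j - x i.+1) (y j - y i.+1).
Definition tangent_xing i := secant_xing_r i i.+1 + secant_xing_l i i.+2.

Lemma secant_xing_square i j : (i.+1 < j)%N -> (j < n)%N -> ~ (i = 0%N /\ j.+1 = n) ->
  secant_xing_r i j = secant_xing_l i j + secant_xing_r i.+1 j - secant_xing_l i j.+1.
Proof.
move=> ij jn not_ends.
have := @xing_square (x j - x i) (y j - y i) _ _ _ _ (unit_steps i) (unit_steps j).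
have e1 (a b c : int) : a - b + (c - a) = c - b by ring.
have e2 (a b c : int) : a - b - (c - b) = a - c by ring.
rewrite !e1 !e2 !e1 /secant_xing_r /secant_xing_l.
have nz k l : (k < l <= n)%N -> ~ (k = 0%N /\ l = n) -> ~ (x l - x k = 0 /\ y l - y k = 0).
  by move=> /andP [kl ln]; apply: secant_neq0.
move/(_ (nz i j ltac:(lia) ltac:(lia)) (nz i j.+1 ltac:(lia) ltac:(lia))).
move/(_ (nz i.+1 j ltac:(lia) ltac:(lia)) (nz i.+1 j.+1 ltac:(lia) ltac:(lia))).
lia.
Qed.

Let row i := \sum_(i.+1 <= j < n) secant_xing_r i j.

Let row_step i : (1 <= i)%N -> (i.+2 <= n)%N ->
  row i = tangent_xing i + row i.+1 - secant_xing_l i n.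
Proof.
move=> i_ge1 i_le; rewrite /row big_ltn; last by lia.
rewrite (@eq_big_nat _ _ _ i.+2 n _
  (fun j => secant_xing_r i.+1 j - (secant_xing_l i j.+1 - secant_xing_l i j))); last first.
  by move=> j /andP [j_ge j_lt]; rewrite secant_xing_square; [ring | lia ..].
rewrite sumrB telescope_sumr; last by lia.
by rewrite /tangent_xing; ring.
Qed.

Let row_sum m : (1 <= m <= n.-1)%N ->
  row m = \sum_(m <= i < n.-1) (tangent_xing i - secant_xing_l i n).
Proof.
move=> /andP [m_ge1 m_le]; have [d md] : exists d, (m + d = n.-1)%N by exists (n.-1 - m)%N; lia.
elim: d m m_ge1 m_le md => [|d IH] m m_ge1 m_le md.
  by rewrite addn0 in md; rewrite md big_geq // /row big_geq //; lia.
rewrite row_step ?(IH m.+1) ?(big_ltn (m := m)); [ring | lia ..].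
Qed.

Let row0 : \sum_(1 <= j < n.-1) secant_xing_r 0 j =
  tangent_xing 0 + row 1 - secant_xing_r 1 n.-1 - secant_xing_l 0 n.-1.
Proof.
rewrite big_ltn; last by lia.
rewrite (@eq_big_nat _ _ _ 2 n.-1 _
  (fun j => secant_xing_r 1 j - (secant_xing_l 0 j.+1 - secant_xing_l 0 j))); last first.
  by move=> j /andP [j_ge j_lt]; rewrite (@secant_xing_square 0%N j); [ring | lia ..].
rewrite sumrB telescope_sumr; last by lia.
rewrite /row (@big_cat_nat _ _ _ n.-1 2 n) /=; [|lia|lia].
have -> : n = (n.-1).+1 by lia.
by rewrite big_nat1 /tangent_xing /=; ring.
Qed.

(* Discrete Hopf Umlaufsatz: summing [secant_xing_square] over the cells
   [i < j] of the secant triangle, the crossings along its diagonal (the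
   turning of the tangent) equal those along the two other sides (the
   secants from the first vertex). *)
Lemma tangent_xing_sum :
  \sum_(0 <= i < n.-1) tangent_xing i =
  \sum_(1 <= j < n.-1) secant_xing_r 0 j + \sum_(1 <= i < n.-1) secant_xing_l i n
  + (secant_xing_l 0 n.-1 + secant_xing_r 1 n.-1).
Proof.
rewrite row0 row_sum ?(big_ltn (m := 0%N)) ?sumrB; [ring | lia ..].
Qed.

End DiscreteHopf.

(** * Closed lattice paths *)

Lemma posx0 p : posx p 0 = 0. Proof. by rewrite /posx take0 big_nil. Qed.
Lemma posy0 p : posy p 0 = 0. Proof. by rewrite /posy take0 big_nil. Qed.

Lemma posxS p i : (i < size p)%N -> posx p i.+1 = posx p i + dx (nth U p i).
Proof. by move=> lt_ip; rewrite /posx (take_nth U) // big_rcons. Qed.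
Lemma posyS p i : (i < size p)%N -> posy p i.+1 = posy p i + dy (nth U p i).
Proof. by move=> lt_ip; rewrite /posy (take_nth U) // big_rcons. Qed.

Lemma unit_vec_step s : unit_vec (dx s) (dy s).
Proof. by case: s; rewrite /unit_vec /=; lia. Qed.

(* The crossings of the ray by the direction of a path turning from [s] to
   [t] through the diagonal direction [s + t]. *)
Definition turn_xing (s t : step) : int :=
  xing (dx s) (dy s) (dx s + dx t) (dy s + dy t)
  + xing (dx s + dx t) (dy s + dy t) (dx t) (dy t).

Definition step_potential (s : step) : int :=
  b2z (s == R) - 2 * b2z (s == D) - b2z (s == L).

Lemma turn_diff_sum4 x y : y != Defs.opp x ->
  turn_diff U x y + turn_diff R x y + turn_diff D x y + turn_diff L x y =
  - 4 * turn_xing x y + step_potential y - step_potential x.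
Proof. by case: x; case: y => // _; vm_compute. Qed.

Section ClosedPath.

Variable p : seq step.

Definition vx i := posx p (i %% size p).
Definition vy i := posy p (i %% size p).
Definition cstep i := nth U p (i %% size p).

Lemma vx_mod i : vx (i %% size p) = vx i. Proof. by rewrite /vx modn_mod. Qed.
Lemma vy_mod i : vy (i %% size p) = vy i. Proof. by rewrite /vy modn_mod. Qed.

Lemma vx_addn i : vx (i + size p) = vx i. Proof. by rewrite /vx modnDr. Qed.
Lemma vy_addn i : vy (i + size p) = vy i. Proof. by rewrite /vy modnDr. Qed.
Lemma cstep_addn i : cstep (i + size p) = cstep i. Proof. by rewrite /cstep modnDr. Qed.

Lemma vx_size : vx (size p) = vx 0. Proof. by rewrite -(vx_addn 0) add0n. Qed.
Lemma vy_size : vy (size p) = vy 0. Proof. by rewrite -(vy_addn 0) add0n. Qed.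

Definition rot_number := \sum_(0 <= i < size p) turn_xing (cstep i) (cstep i.+1).

Lemma nth_rot1 i : (i < size p)%N -> nth U (rot 1 p) i = cstep i.+1.
Proof.
rewrite /cstep; case: p => [//|a q] lt_i; rewrite rot1_cons nth_rcons /=.
case: ifP => [lt_iq|/negbT]; first by rewrite modn_small.
rewrite -leqNgt => ge_iq; have -> : i = size q by move: lt_i => /=; lia.
by rewrite eqxx modnn.
Qed.

Lemma cturns_cyclic s t : (cturns p s t)%:Z =
  \sum_(0 <= i < size p) b2z ((cstep i == s) && (cstep i.+1 == t)).
Proof.
rewrite /cturns count_b2z (big_nth (U, U)) size_zip size_rot minnn.
apply: eq_big_nat => i /andP [_ lt_i].
by rewrite nth_zip ?size_rot //= nth_rot1 // /cstep (modn_small lt_i).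
Qed.

Lemma cxdiff_sum4 : (forall i, cstep i.+1 != Defs.opp (cstep i)) ->
  cxdiff p U + cxdiff p R + cxdiff p D + cxdiff p L = - 4 * rot_number.
Proof.
move=> nonopp; rewrite /cxdiff !cturns_cyclic -!sumrB -!big_split /= /rot_number mulr_sumr.
rewrite (eq_bigr (fun i => - 4 * turn_xing (cstep i) (cstep i.+1)
  + (step_potential (cstep i.+1) - step_potential (cstep i)))) => [|i _].
  by rewrite big_split /= telescope_sumr // -(cstep_addn 0) subrr addr0.
by have := turn_diff_sum4 _ _ (nonopp i); rewrite /turn_diff => ->; ring.
Qed.

Definition edge_cross (P Q : pred int) i :=
  b2z (P (vx i)) * (b2z (Q (vy i.+1)) - b2z (Q (vy i))).

(* The winding number of [p] around the centre (A + 1/2, B + 1/2) of a unit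
   cell, counted on the horizontal ray to the right of the centre. *)
Definition winding (A B : int) :=
  \sum_(0 <= i < size p) edge_cross (fun x => A < x) (fun y => B < y) i.

Lemma winding_left_of A B : (forall i, A < vx i) -> winding A B = 0.
Proof.
move=> A_lt; rewrite /winding (eq_bigr (fun i => b2z (B < vy i.+1) - b2z (B < vy i))).
  by rewrite telescope_sumr // vy_size subrr.
by move=> i _; rewrite /edge_cross A_lt mul1r.
Qed.

Lemma winding_right_of A B : (forall i, vx i <= A) -> winding A B = 0.
Proof.
move=> le_A; rewrite /winding big1 // => i _; rewrite /edge_cross /b2z.
by case: ifP => [lt_Ax|_]; [have := le_A i; lia | rewrite mul0r].
Qed.

Hypothesis p_closed : Defs.closed p.
Hypothesis p_gt0 : (0 < size p)%N.

Lemma vxS i : vx i.+1 = vx i + dx (cstep i).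
Proof.
rewrite /vx /cstep modnS_if //; case: ifP => lt_in; first by rewrite posxS // ltn_pmod.
have e : ((i %% size p).+1 = size p)%N.
  by have := ltn_pmod i p_gt0; move/negbT: lt_in; lia.
by move/andP: p_closed => [/eqP px _]; rewrite posx0 -posxS ?ltn_pmod // e px.
Qed.

Lemma vyS i : vy i.+1 = vy i + dy (cstep i).
Proof.
rewrite /vy /cstep modnS_if //; case: ifP => lt_in; first by rewrite posyS // ltn_pmod.
have e : ((i %% size p).+1 = size p)%N.
  by have := ltn_pmod i p_gt0; move/negbT: lt_in; lia.
by move/andP: p_closed => [_ /eqP py]; rewrite posy0 -posyS ?ltn_pmod // e py.
Qed.

Lemma unit_vec_vS i : unit_vec (vx i.+1 - vx i) (vy i.+1 - vy i).
Proof. by rewrite vxS vyS ![_ + _ - _]addrC !addKr; apply: unit_vec_step. Qed.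

Lemma edge_cross_end P Q i :
  edge_cross P Q i = b2z (P (vx i.+1)) * (b2z (Q (vy i.+1)) - b2z (Q (vy i))).
Proof. by rewrite /edge_cross vxS vyS; case: (cstep i); rewrite /= ?addr0 ?subrr ?mulr0. Qed.

Lemma area2_cyclic :
  area2 p = \sum_(0 <= i < size p) (vx i * vy i.+1 - vx i.+1 * vy i).
Proof.
rewrite /area2 -(big_mkord xpredT (fun i => posx p i * posy p i.+1 - posx p i.+1 * posy p i)).
apply: eq_big_nat => i /andP [_ lt_in].
have pos_v j : (j <= size p)%N -> posx p j = vx j /\ posy p j = vy j.
  rewrite leq_eqVlt => /orP [/eqP ->|lt_j]; last by rewrite /vx /vy modn_small.
  by move/andP: p_closed => [/eqP -> /eqP ->]; rewrite /vx /vy modnn posx0 posy0.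
by have [-> ->] := pos_v i (ltnW lt_in); have [-> ->] := pos_v i.+1 lt_in.
Qed.

(* Shoelace: since each step is axis-parallel, the area is the sum of the
   vertical steps weighted by their abscissa. *)
Lemma area2_vertical :
  area2 p = 2 * \sum_(0 <= i < size p) vx i * (vy i.+1 - vy i).
Proof.
rewrite area2_cyclic mulr_sumr (eq_bigr (fun i => 2 * (vx i * (vy i.+1 - vy i))
  - (vx i.+1 * vy i.+1 - vx i * vy i))) => [|i _].
  by rewrite sumrB telescope_sumr // vx_size vy_size subrr subr0.
have axis : (vx i.+1 - vx i) * (vy i.+1 - vy i) = 0.
  by rewrite vxS vyS; case: (cstep i) => /=; ring.
by rewrite -[LHS]subr0 -axis; ring.
Qed.

Lemma area2_windings (x0 y0 : int) (N : nat) :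
  (forall i, x0 <= vx i <= x0 + N%:Z) -> (forall i, y0 <= vy i <= y0 + N%:Z) ->
  area2 p = 2 * \sum_(0 <= a < N) \sum_(0 <= b < N) winding (x0 + a%:Z) (y0 + b%:Z).
Proof.
move=> vx_box vy_box; rewrite area2_vertical /winding; congr (2 * _); symmetry.
under eq_bigr do rewrite exchange_big /=.
rewrite exchange_big /= (eq_bigr (fun i => vx i * (vy i.+1 - vy i) - x0 * (vy i.+1 - vy i))).
  by rewrite sumrB -mulr_sumr telescope_sumr // vy_size subrr mulr0 subr0.
move=> i _; rewrite /edge_cross.
under eq_bigr do rewrite -mulr_sumr sumrB !sum_b2z_lt ?vy_box //.
by rewrite -mulr_suml sum_b2z_lt ?vx_box //; ring.
Qed.

End ClosedPath.

(** * Simple lattice polygons *)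

Definition turn_xing_rev (s t : step) : int :=
  xing (- dx s) (- dy s) (- dx s - dx t) (- dy s - dy t)
  + xing (- dx s - dx t) (- dy s - dy t) (- dx t) (- dy t).

Definition corner_xing (s t : step) : int :=
  match s, t with U, L | D, R => 1 | R, D | L, U => -1 | _, _ => 0 end.

Lemma turn_xing_add_rev s t : turn_xing s t + turn_xing_rev s t = corner_xing s t.
Proof. by case: s; case: t; vm_compute. Qed.

Lemma vertex_windings {sp sn : step} {nw ne sw se r : int} :
  sn != Defs.opp sp ->
  nw - ne = b2z (sn == U) - b2z (sp == D) ->
  sw - se = b2z (sp == U) - b2z (sn == D) ->
  ne - se = b2z (sn == R) - b2z (sp == L) ->
  r = se + nw + corner_xing sp sn -> r = 1 \/ r = -1 ->
  [/\ nw = 0 \/ nw = r, ne = 0 \/ ne = r, sw = 0 \/ sw = r & se = 0 \/ se = r].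
Proof. by case: sp; case: sn => //= _; rewrite /b2z /= => *; split; lia. Qed.

Lemma extremal_vertex_windings {sp sn : step} {nw ne sw se r : int} :
  sn != Defs.opp sp ->
  nw - ne = b2z (sn == U) - b2z (sp == D) ->
  sw - se = b2z (sp == U) - b2z (sn == D) ->
  ne - se = b2z (sn == R) - b2z (sp == L) ->
  r = se + nw + corner_xing sp sn ->
  nw = 0 -> sw = 0 -> (sp == D) || (sp == L) -> (sn == U) || (sn == R) ->
  (r = 1 \/ r = -1) /\ ne = r.
Proof. by case: sp; case: sn => //= _; rewrite /b2z /=; lia. Qed.

Section SimplePolygon.

Variable p : seq step.
Hypothesis p_closed : Defs.closed p.
Hypothesis p_dir : directed p.
Hypothesis p_nil : p <> [::].
Hypothesis p_distinct : forall i j, (i < j)%N -> (j < size p)%N ->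
  (posx p i, posy p i) <> (posx p j, posy p j).

Lemma size_ge3 : (3 <= size p)%N.
Proof.
move/andP: p_closed; rewrite /posx /posy !take_size => -[/eqP sum_dx /eqP sum_dy].
move: p_dir p_nil sum_dx sum_dy; case: p => [|a [|b [|c q]]] //=.
- by rewrite !big_cons !big_nil; case: a.
- by rewrite /directed /= !big_cons !big_nil; case: a; case: b.
Qed.

Let p_gt0 : (0 < size p)%N. Proof. by have := size_ge3; lia. Qed.

Lemma vertex_inj {i j} : vx p i = vx p j -> vy p i = vy p j -> i = j %[mod size p].
Proof.
rewrite /vx /vy => eq_x eq_y; have lt_i := ltn_pmod i p_gt0; have lt_j := ltn_pmod j p_gt0.
case: (ltngtP (i %% size p) (j %% size p)) => // [ij|ji].
- by case: (p_distinct _ _ ij lt_j); rewrite eq_x eq_y.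
- by case: (p_distinct _ _ ji lt_i); rewrite eq_x eq_y.
Qed.

(* A back-step would return to the previous vertex. *)
Lemma cstep_nonopp i : cstep p i.+1 != Defs.opp (cstep p i).
Proof.
apply/negP => /eqP back.
have eq_x : vx p i.+2 = vx p i by rewrite !vxS // back -addrA; case: (cstep p i) => /=; ring.
have eq_y : vy p i.+2 = vy p i by rewrite !vyS // back -addrA; case: (cstep p i) => /=; ring.
move/eqP: (vertex_inj eq_x eq_y); rewrite -(addn2 i) -{2}(addn0 i) eqn_modDl mod0n.
by rewrite modn_small // size_ge3.
Qed.

Section AtVertex.

Context {k : nat}.
Hypothesis lt_k : (k < size p)%N.

Local Notation vxk := (fun i => vx p (k + i)).
Local Notation vyk := (fun i => vy p (k + i)).
Local Notation prev := (cstep p (k + (size p).-1)).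
Local Notation next := (cstep p k).

Let n_ge3 := size_ge3.
Let size_p_pred : size p = (size p).-1.+1. Proof. by rewrite prednK. Qed.

Lemma succ_prev_vertex : vx p (k + (size p).-1).+1 = vx p k /\ vy p (k + (size p).-1).+1 = vy p k.
Proof. by rewrite -addnS -size_p_pred vx_addn vy_addn. Qed.

Lemma nonopp_at_vertex : next != Defs.opp prev.
Proof. by have := cstep_nonopp (k + (size p).-1); rewrite -addnS -size_p_pred cstep_addn. Qed.

Lemma shifted_secant_neq0 i j : (i < j)%N -> (j <= size p)%N -> ~ (i = 0%N /\ j = size p) ->
  ~ (vxk j - vxk i = 0 /\ vyk j - vyk i = 0).
Proof.
move=> ij j_le not_ends [/eqP + /eqP]; rewrite !subr_eq0 => /eqP eq_x /eqP eq_y.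
move/eqP: (vertex_inj eq_x eq_y); rewrite eqn_modDl eqn_mod_dvd; last exact: ltnW.
have lt_ji : (0 < j - i < size p)%N by lia.
by move=> /(dvdn_leq (proj1 (andP lt_ji))); lia.
Qed.

Lemma rot_number_from : rot_number p =
  \sum_(0 <= i < (size p).-1) turn_xing (cstep p (k + i)) (cstep p (k + i).+1)
  + turn_xing prev next.
Proof.
rewrite /rot_number -(sum_periodic_shift (fun i => turn_xing (cstep p i) (cstep p i.+1)) _ k).
  by rewrite {1}size_p_pred big_nat_recr //= -addnS -size_p_pred addnC cstep_addn.
by move=> i; rewrite /= cstep_addn -addSn cstep_addn.
Qed.

Lemma sum_edge_cross_from P Q : ~~ P (vx p k) ->
  \sum_(1 <= j < (size p).-1) edge_cross p P Q (k + j) = \sum_(0 <= i < size p) edge_cross p P Q i.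
Proof.
move=> notP; rewrite -(sum_periodic_shift (edge_cross p P Q) _ k); last first.
  by move=> i; rewrite /edge_cross /= vx_addn -addSn !vy_addn.
rewrite (big_ltn (m := 0%N)) // {2}size_p_pred big_nat_recr /=; last by lia.
rewrite [edge_cross p P Q (k + (size p).-1)]edge_cross_end //.
rewrite /edge_cross addn0 (negbTE notP) (proj1 succ_prev_vertex) (negbTE notP) /b2z !mul0r.
by rewrite add0r addr0.
Qed.

Lemma secant_xing_r0_sum :
  \sum_(1 <= j < (size p).-1) secant_xing_r vxk vyk 0 j = winding p (vx p k) (vy p k - 1).
Proof.
rewrite /winding -sum_edge_cross_from ?ltxx //; apply: eq_big_nat => j _.
by rewrite /secant_xing_r /edge_cross /xing addn0 addnS; b2z_lia.
Qed.

Lemma secant_xing_l_sum :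
  \sum_(1 <= i < (size p).-1) secant_xing_l vxk vyk i (size p) = winding p (vx p k - 1) (vy p k).
Proof.
have vk_size : vx p (k + size p) = vx p k /\ vy p (k + size p) = vy p k.
  by rewrite vx_addn vy_addn.
rewrite (@eq_big_nat _ _ _ 1 (size p).-1 _
  (fun i => edge_cross p (fun x => x < vx p k) (fun y => y <= vy p k) (k + i))) => [|i _]; last first.
  by rewrite /secant_xing_l /edge_cross /xing !(proj1 vk_size, proj2 vk_size) addnS; b2z_lia.
rewrite sum_edge_cross_from ?ltxx // /winding.
rewrite (eq_bigr (fun i => edge_cross p (fun x => vx p k - 1 < x) (fun y => vy p k < y) i
  - (b2z (vy p k < vy p i.+1) - b2z (vy p k < vy p i)))) => [|i _]; last first.
  by rewrite /edge_cross; b2z_lia.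
by rewrite sumrB telescope_sumr // vy_size subrr subr0.
Qed.

Lemma secant_xing_corner :
  secant_xing_l vxk vyk 0 (size p).-1 + secant_xing_r vxk vyk 1 (size p).-1 = turn_xing_rev prev next.
Proof.
have [last_x last_y] := succ_prev_vertex.
have prev_x : vx p (k + (size p).-1) = vx p k - dx prev.
  by rewrite -last_x vxS //; ring.
have prev_y : vy p (k + (size p).-1) = vy p k - dy prev.
  by rewrite -last_y vyS //; ring.
rewrite /secant_xing_l /secant_xing_r /turn_xing_rev /= addn0 addn1 -size_p_pred.
rewrite vx_addn vy_addn prev_x prev_y !vxS ?vyS //.
by congr (xing _ _ _ _ + xing _ _ _ _); ring.
Qed.

Lemma tangent_xing_at i :
  tangent_xing vxk vyk i = turn_xing (cstep p (k + i)) (cstep p (k + i).+1).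
Proof.
rewrite /tangent_xing /secant_xing_r /secant_xing_l /turn_xing /= !addnS !vxS ?vyS //.
by congr (xing _ _ _ _ + xing _ _ _ _); ring.
Qed.

Lemma rot_number_at_vertex : rot_number p =
  winding p (vx p k) (vy p k - 1) + winding p (vx p k - 1) (vy p k) + corner_xing prev next.
Proof.
have unit_steps i : unit_vec (vxk i.+1 - vxk i) (vyk i.+1 - vyk i).
  by rewrite /= !addnS; apply: unit_vec_vS.
have := tangent_xing_sum _ _ _ unit_steps shifted_secant_neq0 n_ge3.
rewrite (eq_bigr _ (fun i _ => tangent_xing_at i)) => hopf.
rewrite rot_number_from hopf secant_xing_r0_sum secant_xing_l_sum secant_xing_corner.
by rewrite -turn_xing_add_rev; ring.
Qed.

Local Notation at_vertex i := ((vx p i == vx p k) && (vy p i == vy p k)).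

Lemma at_vertexE i : at_vertex i = (i %% size p == k)%N.
Proof.
apply/andP/eqP => [[/eqP eq_x /eqP eq_y]|eq_ik].
  by rewrite -(modn_small lt_k); apply: vertex_inj.
by rewrite -vx_mod -vy_mod eq_ik !eqxx.
Qed.

Lemma sum_at_vertex (f g : step -> int) :
  \sum_(0 <= i < size p) (b2z (at_vertex i) * f (cstep p i) + b2z (at_vertex i.+1) * g (cstep p i))
  = f next + g prev.
Proof.
rewrite big_split /=.
have prev_lt : ((k + (size p).-1) %% size p < size p)%N by rewrite ltn_pmod.
have prev_mod : ((k + (size p).-1) %% size p = if k == 0%N then (size p).-1 else k.-1)%N.
  have [->|k_neq0] := eqVneq k 0%N; first by rewrite add0n modn_small //; lia.
  have -> : (k + (size p).-1 = k.-1 + size p)%N by lia.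
  by rewrite modnDr modn_small //; lia.
rewrite (@eq_big_nat _ _ _ 0 (size p) _ (fun i => b2z (i == k) * f (cstep p i))); last first.
  by move=> i /andP [_ lt_i]; rewrite at_vertexE modn_small.
rewrite (@eq_big_nat _ _ _ 0 (size p) (fun i => b2z (at_vertex i.+1) * g (cstep p i))
  (fun i => b2z (i == (k + (size p).-1) %% size p)%N * g (cstep p i))); last first.
  move=> i /andP [_ lt_i]; rewrite at_vertexE modnS_if // prev_mod modn_small //.
  by case: ifP => ?; case: ifP => ?; congr (b2z _ * _); apply/eqP/eqP; lia.
by rewrite !sum_b2z_eq // /cstep modn_mod.
Qed.

Lemma winding_nw_sub_ne :
  winding p (vx p k - 1) (vy p k) - winding p (vx p k) (vy p k) = b2z (next == U) - b2z (prev == D).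
Proof.
rewrite /winding -sumrB -(sum_at_vertex (fun s => b2z (s == U)) (fun s => - b2z (s == D))).
apply: eq_bigr => i _; rewrite /edge_cross !vxS ?vyS //.
by case: (cstep p i) => /=; b2z_lia.
Qed.

Lemma winding_sw_sub_se :
  winding p (vx p k - 1) (vy p k - 1) - winding p (vx p k) (vy p k - 1) =
  b2z (prev == U) - b2z (next == D).
Proof.
rewrite /winding -sumrB [RHS]addrC -(sum_at_vertex (fun s => - b2z (s == D)) (fun s => b2z (s == U))).
apply: eq_bigr => i _; rewrite /edge_cross !vxS ?vyS //.
by case: (cstep p i) => /=; b2z_lia.
Qed.

Lemma winding_ne_sub_se :
  winding p (vx p k) (vy p k) - winding p (vx p k) (vy p k - 1) = b2z (next == R) - b2z (prev == L).
Proof.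
pose on_row i := b2z (vx p k < vx p i) * b2z (vy p i == vy p k).
rewrite /winding -sumrB (eq_bigr (fun i =>
  (b2z (at_vertex i) * b2z (cstep p i == R) + b2z (at_vertex i.+1) * - b2z (cstep p i == L))
  - (on_row i.+1 - on_row i))) => [|i _].
  rewrite sumrB (sum_at_vertex (fun s => b2z (s == R)) (fun s => - b2z (s == L))).
  by rewrite telescope_sumr // /on_row vx_size vy_size subrr subr0.
rewrite /edge_cross /on_row !vxS ?vyS //.
by case: (cstep p i) => /=; rewrite ?addr0; b2z_lia.
Qed.

End AtVertex.

Lemma winding_at_vertex k (r := rot_number p) : (k < size p)%N -> r = 1 \/ r = -1 ->
  [/\ winding p (vx p k - 1) (vy p k) = 0 \/ winding p (vx p k - 1) (vy p k) = r,
       winding p (vx p k) (vy p k) = 0 \/ winding p (vx p k) (vy p k) = r,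
       winding p (vx p k - 1) (vy p k - 1) = 0 \/ winding p (vx p k - 1) (vy p k - 1) = r &
       winding p (vx p k) (vy p k - 1) = 0 \/ winding p (vx p k) (vy p k - 1) = r].
Proof.
move=> lt_k rot_unit; apply: (vertex_windings nonopp_at_vertex (winding_nw_sub_ne lt_k)
  (winding_sw_sub_se lt_k) (winding_ne_sub_se lt_k) _ rot_unit).
by rewrite /r (rot_number_at_vertex lt_k); ring.
Qed.

Lemma lowest_leftmost_vertex : exists2 k, (k < size p)%N &
  (forall i, vx p k <= vx p i) /\ (forall i, vx p i = vx p k -> vy p k <= vy p i).
Proof.
pose i0 : 'I_(size p) := Ordinal p_gt0.
have [k1 _ min_x] := @arg_minP _ _ _ i0 xpredT (fun i => vx p i) isT.
have [k /eqP eq_x min_y] :=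
  @arg_minP _ _ _ k1 (fun i => vx p i == vx p k1) (fun i => vy p i) (eqxx _).
exists k => //; split => [i|i eq_ik].
  by rewrite eq_x -(vx_mod p i); exact: (min_x (Ordinal (ltn_pmod i p_gt0))).
rewrite -(vy_mod p i); apply: (min_y (Ordinal (ltn_pmod i p_gt0))) => /=.
by rewrite vx_mod eq_ik eq_x.
Qed.

(* At the lowest leftmost vertex the polygon turns from a step down or left to
   a step up or right, with nothing to the left of it. *)
Lemma rot_number_unit : (rot_number p = 1 \/ rot_number p = -1) /\
  exists2 k, (k < size p)%N & winding p (vx p k) (vy p k) = rot_number p.
Proof.
have [k lt_k [min_x min_y]] := lowest_leftmost_vertex.
have prev_DL : (cstep p (k + (size p).-1) == D) || (cstep p (k + (size p).-1) == L).
  have [last_x last_y] := succ_prev_vertex (k := k).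
  have := min_x (k + (size p).-1)%N; have := min_y (k + (size p).-1)%N.
  rewrite -last_x -last_y vxS ?vyS //.
  by case: (cstep p (k + (size p).-1)) => //= hy hx; exfalso; lia.
have next_UR : (cstep p k == U) || (cstep p k == R).
  have := min_x k.+1; have := min_y k.+1; rewrite vxS ?vyS //.
  by case: (cstep p k) => //= hy hx; exfalso; lia.
have nw0 B : winding p (vx p k - 1) B = 0.
  by apply: winding_left_of => // i; have := min_x i; lia.
have [rot_unit ne_rot] := extremal_vertex_windings nonopp_at_vertex
  (winding_nw_sub_ne lt_k) (winding_sw_sub_se lt_k) (winding_ne_sub_se lt_k)
  (rot_number_at_vertex lt_k) (nw0 _) (nw0 _) prev_DL next_UR.
by split => //; exists k.
Qed.

Lemma vertex_bound : exists M : int, forall i, `|vx p i| <= M /\ `|vy p i| <= M.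
Proof.
exists (\sum_(0 <= i < size p) (`|vx p i| + `|vy p i|)) => i.
have F_ge0 j : 0 <= `|vx p j| + `|vy p j| by rewrite addr_ge0.
have := ler_sum_term _ _ _ F_ge0 (ltn_pmod i p_gt0); rewrite vx_mod vy_mod.
set S := \sum_(_ <= _ < _) _; by have := normr_ge0 (vx p i); have := normr_ge0 (vy p i); lia.
Qed.

Definition cell_corner A B i :=
  ((A == vx p i) || (A == vx p i - 1)) && ((B == vy p i) || (B == vy p i - 1)).

(* A vertical edge at abscissa [A + 1] across [B + 1/2] would have corners of
   the cell as endpoints. *)
Lemma winding_succ A B : (forall i, (i < size p)%N -> ~~ cell_corner A B i) ->
  winding p A B = winding p (A + 1) B.
Proof.
move=> no_corner; apply/eqP; rewrite -subr_eq0; apply/eqP.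
rewrite /winding -sumrB big1_seq // => i; rewrite mem_index_iota => /andP [_ lt_i].
move: (no_corner i lt_i); rewrite /cell_corner /edge_cross vyS //.
by case: (cstep p i) => /= not_corner; rewrite ?addr0; b2z_lia.
Qed.

(* Sweeping from the right of the polygon, the winding number can only change
   at a cell having a vertex as corner, where [winding_at_vertex] applies. *)
Lemma winding_0_or_rot A B : rot_number p = 1 \/ rot_number p = -1 ->
  winding p A B = 0 \/ winding p A B = rot_number p.
Proof.
move=> rot_unit; have [M bound] := vertex_bound.
have [d le_MA] : exists d : nat, M <= A + d%:Z by exists (absz (M - A)); lia.
elim: d A le_MA => [|d IH] A le_MA.
  by left; apply: winding_right_of => i; have := bound i; lia.
have [/hasP [i]|/hasPn no_corner] := boolP (has (cell_corner A B) (iota 0 (size p))).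
  rewrite mem_iota => /andP [_ lt_i].
  have [nw ne sw se] := winding_at_vertex _ lt_i rot_unit.
  by case/andP => /orP [] /eqP -> /orP [] /eqP ->.
rewrite winding_succ => [|i lt_i]; first by apply: IH; lia.
by apply: no_corner; rewrite mem_iota.
Qed.

Lemma rot_number_area : 0 < rot_number p * area2 p.
Proof.
have [rot_unit [k lt_k wind_k]] := rot_number_unit.
have [M bound] := vertex_bound.
pose N := (absz (2 * M)%R).+1.
have N_eq : N%:Z = 2 * M + 1 by have := bound 0%N; rewrite /N; lia.
rewrite (@area2_windings _ p_closed p_gt0 (- M) (- M) N) => [|i|i]; last 2 first.
- by have := bound i; lia.
- by have := bound i; lia.
rewrite mulrCA mulr_sumr; under eq_bigr do rewrite mulr_sumr.
have rW_ge0 A B : 0 <= rot_number p * winding p A B.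
  by case: (winding_0_or_rot A B rot_unit) => ->; case: rot_unit => ->.
set r := rot_number p.
have := ler_sum_term (fun b => r * winding p (vx p k) (- M + b%:Z)) (absz (vy p k + M)) N
  (fun _ => rW_ge0 _ _) ltac:(have := bound k; lia).
have := ler_sum_term (fun a => \sum_(0 <= b < N) r * winding p (- M + a%:Z) (- M + b%:Z))
  (absz (vx p k + M)) N (fun _ => sumr_ge0 _ (fun _ _ => rW_ge0 _ _)) ltac:(have := bound k; lia).
have -> : - M + (absz (vx p k + M))%:Z = vx p k by have := bound k; lia.
have -> : - M + (absz (vy p k + M))%:Z = vy p k by have := bound k; lia.
rewrite /= wind_k; have : r * r = 1 by rewrite /r; case: rot_unit => ->.
set S1 := \sum_(_ <= _ < _) _; set S2 := \sum_(_ <= _ < _) _; lia.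
Qed.

Lemma cxdiff_sum4_orientation :
  (clockwise p -> cxdiff p U + cxdiff p R + cxdiff p D + cxdiff p L = 4) /\
  (counterclockwise p -> cxdiff p U + cxdiff p R + cxdiff p D + cxdiff p L = -4).
Proof.
rewrite cxdiff_sum4; last exact: cstep_nonopp.
have [rot_unit _] := rot_number_unit; have := rot_number_area.
rewrite /clockwise /counterclockwise.
by case: rot_unit => -> area_pos; split => ?; lia.
Qed.

End SimplePolygon.

Theorem proposition2p2 (p : seq step) (a b : step) :
  directed p -> p <> [::] -> head a p = a -> last b p = b ->
  (* (1) and (2) *)
  (exists k : int,
     (forall s : step, (xdiff p s - k = 0) \/ (xdiff p s - k = 1)) /\
     (forall m : nat, (m <= 3)%N -> iter m cw_next a = b ->
        (forall m' : nat, (m' < m)%N -> iter m' cw_next a <> b) ->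
        forall s : step,
          xdiff p s - k = 1 <->
          exists2 j : nat, (j < m)%N & iter j cw_next a = s)) /\
  (* (3) *)
  (self_avoiding_closed p ->
     (clockwise p -> cxdiff p U + cxdiff p R + cxdiff p D + cxdiff p L = 4) /\
     (counterclockwise p -> cxdiff p U + cxdiff p R + cxdiff p D + cxdiff p L = -4)).
Proof.
move=> p_dir p_nil head_a last_b; split; last first.
  by move=> [p_closed p_distinct]; apply: cxdiff_sum4_orientation.
have [k xdiff_k] := xdiff_cw_arc _ _ _ p_dir p_nil head_a last_b.
exists k; split => [s | m m_le3 iter_m _ s]; rewrite xdiff_k /b2z.
  by case: in_cw_arc; [right | left].
case: (in_cw_arcP _ _ _ s m_le3 iter_m) => [in_arc | not_in_arc]; first by split.
by split => // -[j j_lt iter_j]; case: not_in_arc; exists j.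
Qed.
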